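(* Let $m, n_0, n_1$ be positive integers and $n(\lambda) = n_0 + n_1\lambda$. If nonzero polynomials $x(\lambda), y(\lambda), z(\lambda) \in \mathbb{Q}[\lambda]$ satisfy $$\frac{m}{n(\lambda)} = \frac{1}{x(\lambda)} + \frac{1}{y(\lambda)} + \frac{1}{z(\lambda)}$$ identically, then at least one of $x, y, z$ has degree $1$.
   Context: $\lambda$ is an indeterminate; the equation is an identity of rational functions in $\lambda$. *)

From mathcomp Require Import all_boot all_order all_algebra.
From mathcomp Require Import fraction.
Set Implicit Arguments. Unset Strict Implicit. Unset Printing Implicit Defensive.
Import GRing.Theory.
Local Open Scope ring_scope.

Definition ratfun (p : {poly rat}) : {fraction {poly rat}} := @FracField.tofrac _ p.

From mathcomp Require Import all_boot all_order all_algebra.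
From mathcomp Require Import fraction ring zify.
Set Implicit Arguments.
Unset Strict Implicit.
Unset Printing Implicit Defensive.
Import GRing.Theory Num.Theory.
Local Open Scope ring_scope.

(* Clearing denominators gives k x y z = N (x y + x z + y z) with deg N = 1, so
deg x + deg y + deg z = 1 + deg (x y + x z + y z), which is at most one more than
the largest sum of two of the degrees: the smallest degree is at most 1. If it
is 0, say x = a, the same count forces a second constant y = b, and then
k a b z = N ((a + b) z + a b). For a + b <> 0 the two sides differ in degree,
while a + b = 0 gives k z = N. *)

Local Notation "p %:F" := (@FracField.tofrac _ p).

Definition erdos_straus_eq {R : idomainType} (k : R) (N x y z : {poly R}) :=
  k%:P * (x * y * z) = N * (x * y + x * z + y * z).

Lemma mulr_sum_inv3 (F : fieldType) (a b c : F) : a != 0 -> b != 0 -> c != 0 ->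
  (a^-1 + b^-1 + c^-1) * (a * b * c) = a * b + a * c + b * c.
Proof. by move=> a0 b0 c0; field; rewrite a0 b0 c0. Qed.

Lemma tofrac_erdos_straus_eq (R : idomainType) (k : R) (N x y z : {poly R}) :
  N != 0 -> x != 0 -> y != 0 -> z != 0 ->
  k%:P%:F / N%:F = x%:F^-1 + y%:F^-1 + z%:F^-1 -> erdos_straus_eq k N x y z.
Proof.
rewrite -!(tofrac_eq0 (R := {poly R})) => N0 x0 y0 z0 E.
apply/eqP; rewrite /erdos_straus_eq -tofrac_eq; apply/eqP.
rewrite !(tofracM, tofracD) -(divfK N0 k%:P%:F) E mulrAC.
by rewrite (mulr_sum_inv3 x0 y0 z0) mulrC.
Qed.

Lemma size_polyCDZX (R : idomainType) (c d : R) : d != 0 ->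
  size (c%:P + d *: 'X) = 2%N.
Proof.
move=> d0; rewrite addrC size_polyDl size_scale ?size_polyX //.
exact: leq_ltn_trans (size_polyC_leq1 c) _.
Qed.

Lemma size_polyD3 (R : nzRingType) (p q r : {poly R}) :
  (size (p + q + r)%R <= maxn (maxn (size p) (size q)) (size r))%N.
Proof.
apply: leq_trans (size_polyD _ _) _; rewrite geq_max leq_maxr andbT.
exact: leq_trans (size_polyD _ _) (leq_maxl _ _).
Qed.

Section ErdosStrausPoly.
Variables (R : idomainType) (k : R) (N : {poly R}).
Hypotheses (k_neq0 : k != 0) (size_N : size N = 2%N).
Local Notation ES := (erdos_straus_eq k N).

Lemma erdos_straus_eqC12 x y z : ES x y z -> ES y x z.
Proof. by rewrite /erdos_straus_eq [y * x]mulrC => ->; congr (_ * _); ring. Qed.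

Lemma erdos_straus_eqC23 x y z : ES x y z -> ES x z y.
Proof. by rewrite /erdos_straus_eq mulrAC => ->; congr (_ * _); ring. Qed.

Section Solution.
Variables x y z : {poly R}.
Hypotheses (x_neq0 : x != 0) (y_neq0 : y != 0) (z_neq0 : z != 0).
Hypothesis E : ES x y z.

Lemma erdos_straus_eq_sum_neq0 : x * y + x * z + y * z != 0.
Proof.
have : k%:P * (x * y * z) != 0 by rewrite !mulf_neq0 ?polyC_eq0.
by rewrite E; apply: contraNneq => ->; rewrite mulr0.
Qed.

Lemma erdos_straus_eq_size :
  ((size (x * y + x * z + y * z)%R).+3 = size x + size y + size z)%N.
Proof.
have N_neq0 : N != 0 by rewrite -size_poly_eq0 size_N.
have := congr1 (fun p : {poly R} => size p) E.
rewrite size_Cmul // !size_mul ?mulf_neq0 ?erdos_straus_eq_sum_neq0 // size_N.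
move: x_neq0 y_neq0 z_neq0; rewrite -!size_poly_eq0.
(* lia only treats the size of a sum as an atom once it is named. *)
set s := size (x * y + x * z + y * z); lia.
Qed.

Lemma erdos_straus_eq_size_le2 : [|| size x <= 2, size y <= 2 | size z <= 2]%N.
Proof.
have := erdos_straus_eq_size; have := size_polyD3 (x * y) (x * z) (y * z).
rewrite !size_mul //; set s := size (x * y + x * z + y * z); lia.
Qed.

Lemma erdos_straus_eq_const_pair : size x = 1%N -> (size y == 1%N) || (size z == 1%N).
Proof.
move=> sx1; apply/contraT => /norP[sy1 sz1].
move: y_neq0 z_neq0; rewrite -!size_poly_eq0 => sy0 sz0.
have lt_yz : (size (x * y + x * z)%R < size (y * z)%R)%N.
  apply: leq_ltn_trans (size_polyD _ _) _; rewrite !size_mul // sx1; lia.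
have := erdos_straus_eq_size.
rewrite [x * y + _ + _]addrC size_polyDl // size_mul //; lia.
Qed.

Lemma erdos_straus_eq_consts_linear : size x = 1%N -> size y = 1%N -> size z = 2%N.
Proof.
move=> sx1 sy1; have [xy0 | xy_neq0] := eqVneq (x + y) 0.
  have S_xy : x * y + x * z + y * z = x * y.
    by rewrite -addrA -mulrDl xy0 mul0r addr0.
  have kz_N : k%:P * z = N.
    apply: (mulfI (mulf_neq0 x_neq0 y_neq0)).
    by move: E; rewrite /erdos_straus_eq S_xy => Exy; rewrite mulrCA Exy mulrC.
  by rewrite -size_N -kz_N size_Cmul.
have sxy : size (x + y) = 1%N.
  move: xy_neq0 (size_polyD x y); rewrite -size_poly_eq0 sx1 sy1.
  set s := size (x + y); lia.
have S_size := erdos_straus_eq_size; have S0 := erdos_straus_eq_sum_neq0.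
rewrite -addrA -mulrDl [x * y + _]addrC in S_size S0.
have sz_gt1 : (1 < size z)%N.
  move: S0 S_size; rewrite -size_poly_eq0 sx1 sy1.
  set s := size ((x + y) * z + x * y); lia.
move: S_size; rewrite size_polyDl !size_mul ?sxy ?sx1 ?sy1 //; lia.
Qed.

End Solution.

Lemma erdos_straus_eq_deg1_of_size_le2 x y z :
  x != 0 -> y != 0 -> z != 0 -> ES x y z -> (size x <= 2)%N ->
  [|| size x == 2, size y == 2 | size z == 2]%N.
Proof.
move=> x0 y0 z0 E sx; case: eqP => [//|sx2] /=.
have sx1 : size x = 1%N by move: x0; rewrite -size_poly_eq0; lia.
case/orP: (erdos_straus_eq_const_pair x0 y0 z0 E sx1) => /eqP s1.
  by rewrite (erdos_straus_eq_consts_linear x0 y0 z0 E sx1 s1) eqxx orbT.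
by rewrite (erdos_straus_eq_consts_linear x0 z0 y0 (erdos_straus_eqC23 E) sx1 s1) eqxx.
Qed.

Lemma erdos_straus_eq_deg1 x y z :
  x != 0 -> y != 0 -> z != 0 -> ES x y z ->
  [|| size x == 2, size y == 2 | size z == 2]%N.
Proof.
move=> x0 y0 z0 E.
case/or3P: (erdos_straus_eq_size_le2 x0 y0 z0 E) => small.
- exact: erdos_straus_eq_deg1_of_size_le2.
- by rewrite orbCA (erdos_straus_eq_deg1_of_size_le2 y0 x0 z0 (erdos_straus_eqC12 E)).
- have E' := erdos_straus_eqC12 (erdos_straus_eqC23 E).
  by rewrite orbA orbC (erdos_straus_eq_deg1_of_size_le2 z0 x0 y0 E').
Qed.

End ErdosStrausPoly.

Theorem lemma1 (m n0 n1 : nat) (x y z : {poly rat}) :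
  (0 < m)%N -> (0 < n0)%N -> (0 < n1)%N ->
  x != 0 -> y != 0 -> z != 0 ->
  ratfun (m%:R)%:P / ratfun (n0%:R%:P + n1%:R *: 'X)
    = (ratfun x)^-1 + (ratfun y)^-1 + (ratfun z)^-1 ->
  (size x == 2)%N || (size y == 2)%N || (size z == 2)%N.
Proof.
move=> m_gt0 _ n1_gt0 x0 y0 z0 E.
have k_neq0 : (m%:R : rat) != 0 by rewrite pnatr_eq0 -lt0n.
have size_N : size (n0%:R%:P + n1%:R *: 'X : {poly rat}) = 2%N.
  by rewrite size_polyCDZX // pnatr_eq0 -lt0n.
rewrite -orbA; apply: (erdos_straus_eq_deg1 k_neq0 size_N x0 y0 z0).
by apply: tofrac_erdos_straus_eq E; rewrite // -size_poly_eq0 size_N.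
Qed.
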